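(* For every $3$-graph $F\in\mathbf{FACTOR}_3^{\cdot,2}$ we have $\pi_{\cdot}(F)=0$.
   Context: A $k$-graph $H$ has edge set $E(H)\subseteq\binom{V(H)}{k}$; $\delta_2(H)$ is the minimum over pairs of vertices of the number of edges containing the pair. An $F$-factor is a set of vertex-disjoint copies of $F$ covering all vertices; $H$ is $F$-free if it contains no copy of $F$. An $(n,p,\mu,\cdot)$ $k$-graph is a $k$-graph $H$ on a vertex set $V$ with $|V|=n$ such that for all $X_1,\dots,X_k\subseteq V$, the number of $k$-tuples $(x_1,\dots,x_k)\in X_1\times\cdots\times X_k$ with $\{x_1,\dots,x_k\}\in E(H)$ is at least $p|X_1|\cdots|X_k|-\mu n^k$. $\mathbf{FACTOR}_3^{\cdot,2}$ is the class of $3$-graphs $F$ such that for all $0<p,\alpha<1$ there exist $n_0$ and $\mu>0$ such that every $(n,p,\mu,\cdot)$ $3$-graph $H$ with $\delta_2(H)\ge\alpha n$, $n\ge n_0$ and $v(F)\mid n$ has an $F$-factor. $\pi_{\cdot}(F)=\sup\{p\in[0,1]:$ for every $\mu>0$ and $n_0$ there is an $F$-free $(n,p,\mu,\cdot)$ $3$-graph with $n\ge n_0\}$. *)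

From HB Require Import structures.
From mathcomp Require Import all_boot all_order all_algebra.
From mathcomp Require Import boolp classical_sets reals.
Set Implicit Arguments. Unset Strict Implicit. Unset Printing Implicit Defensive.
Import Order.TTheory GRing.Theory Num.Theory.
Local Open Scope ring_scope.

Definition is_kgraph (k : nat) (V : finType) (E : {set {set V}}) : Prop :=
  forall e, e \in E -> #|e| = k.

Definition is_copy (VF V : finType) (EF : {set {set VF}}) (E : {set {set V}})
  (f : VF -> V) : Prop :=
  injective f /\ forall e, e \in EF -> f @: e \in E.

Definition F_free (VF V : finType) (EF : {set {set VF}}) (E : {set {set V}}) : Prop :=
  ~ exists f : VF -> V, is_copy EF E f.

Definition has_F_factor (VF V : finType) (EF : {set {set VF}}) (E : {set {set V}}) : Prop :=
  exists P : {set {set V}}, finset.partition P [set: V] /\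
    forall B, B \in P -> exists f : VF -> V, is_copy EF E f /\ f @: [set: VF] = B.

Definition min_codeg_ge (R : realType) (V : finType) (E : {set {set V}}) (a : R) : Prop :=
  forall u v : V, u != v -> a <= (#|[set e in E | (u \in e) && (v \in e)]|)%:R.

Definition ntriples (n : nat) (E : {set {set 'I_n}}) (X1 X2 X3 : {set 'I_n}) : nat :=
  #|[set t : 'I_n * 'I_n * 'I_n |
      [&& t.1.1 \in X1, t.1.2 \in X2, t.2 \in X3 &
          [set t.1.1; t.1.2; t.2] \in E]]|.

Definition is_npmu_dot (R : realType) (n : nat) (p mu : R) (E : {set {set 'I_n}}) : Prop :=
  is_kgraph 3 E /\
  forall X1 X2 X3 : {set 'I_n},
    p * (#|X1|)%:R * (#|X2|)%:R * (#|X3|)%:R - mu * (n%:R) ^+ 3 <= (ntriples E X1 X2 X3)%:R.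

Definition in_FACTOR (R : realType) (VF : finType) (EF : {set {set VF}}) : Prop :=
  forall p alpha : R, 0 < p < 1 -> 0 < alpha < 1 ->
  exists (n0 : nat) (mu : R), 0 < mu /\
    forall (n : nat) (E : {set {set 'I_n}}),
      is_npmu_dot p mu E -> min_codeg_ge E (alpha * n%:R) ->
      (n0 <= n)%N -> (#|VF| %| n)%N -> has_F_factor EF E.

Definition pi_dot (R : realType) (VF : finType) (EF : {set {set VF}}) : R :=
  sup [set p : R | 0 <= p <= 1 /\
        forall (mu : R) (n0 : nat), 0 < mu ->
          exists (n : nat) (E : {set {set 'I_n}}),
            (n0 <= n)%N /\ is_npmu_dot p mu E /\ F_free EF E]%classic.

(* Let k = v(F) > 0 and suppose there were F-free (n, p, mu)-dense 3-graphs H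
   with p > 0 for every mu and arbitrarily large n. Restrict H to m <= n
   vertices with k | m and n <= 2m, and plant every triple meeting a set S of
   m/(2k) vertices. The planted graph is still (m, p/2, mu')-dense, and every
   pair lies in about |S| of its edges, a linear codegree; since F is in
   FACTOR it has an F-factor, made of m/k copies of F. Each copy meets S, as a
   copy avoiding S would lie in H, so m/k <= |S| = m/(2k): a contradiction. *)

From mathcomp Require Import all_boot all_order all_algebra.
From mathcomp Require Import zify ring lra.
Import Order.TTheory GRing.Theory Num.Theory.
Set Implicit Arguments. Unset Strict Implicit.

Definition preim_graph (T U : finType) (f : T -> U) (E : {set {set U}}) :
  {set {set T}} := [set e : {set T} | f @: e \in E].

Definition hitting_triples (T : finType) (S : {set T}) : {set {set T}} :=
  [set e : {set T} | (#|e| == 3) && (e :&: S != set0)].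

Definition planted_graph (T U : finType) (f : T -> U) (E : {set {set U}})
    (S : {set T}) : {set {set T}} :=
  preim_graph f E :|: hitting_triples S.

Lemma is_kgraph_planted (T U : finType) (f : T -> U) (E : {set {set U}})
    (S : {set T}) :
  injective f -> is_kgraph 3 E -> is_kgraph 3 (planted_graph f E S).
Proof.
move=> f_inj E3 e; rewrite !inE => /orP[/E3 | /andP[/eqP //]].
by rewrite card_imset.
Qed.

Lemma is_copy_planted (VF T U : finType) (EF : {set {set VF}}) (g : T -> U)
    (E : {set {set U}}) (S : {set T}) (f : VF -> T) :
  injective g -> is_copy EF (planted_graph g E S) f -> f @: setT :&: S = set0 ->
  is_copy EF E (g \o f).
Proof.
move=> g_inj [f_inj fE] fS; split=> [|e /fE]; first exact: inj_comp.
rewrite !inE imset_comp => /orP[// | /andP[_]].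
case/set0Pn=> x; rewrite inE => /andP[xfe xS].
have : x \in f @: setT :&: S by rewrite inE xS (subsetP (imsetS f (subsetT e))).
by rewrite fS inE.
Qed.

Lemma codeg_hitting_triples (T : finType) (S : {set T}) (u v : T) : u != v ->
  (#|S| <= 2 + #|[set e in hitting_triples S | (u \in e) && (v \in e)]|)%N.
Proof.
move=> uv; have S_le : (#|S| <= 2 + #|S :\ u :\ v|)%N.
  rewrite (cardsD1 u S) (cardsD1 v (S :\ u)).
  by case: (u \in S); case: (v \in S :\ u);
    rewrite /= ?add0n ?add1n ?ltnS ?leqW ?leq_addl.
apply: (leq_trans S_le); rewrite leq_add2l.
have uvx_inj : {in S :\ u :\ v &, injective (fun x => [set u; v; x])}.
  move=> x y; rewrite !inE => /and3P[xv xu _] /and3P[yv yu _] Exy.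
  have : x \in [set u; v; y] by rewrite -Exy !inE eqxx !orbT.
  by rewrite !inE (negbTE xv) (negbTE xu) => /eqP.
rewrite -(card_in_imset uvx_inj); apply: subset_leq_card; apply/subsetP=> e.
case/imsetP=> x; rewrite !inE => /and3P[xv xu xS] ->.
rewrite !inE !eqxx ?orbT /= andbT setUC cardsU1 cards2 !inE negb_or xu xv uv /=.
by apply/set0Pn; exists x; rewrite !inE eqxx xS.
Qed.

Lemma card_partition_le_hitting (T : finType) (P : {set {set T}}) (D S : {set T}) :
  partition P D -> {in P, forall B, B :&: S != set0} -> (#|P| <= #|S|)%N.
Proof.
move=> PD PS; pose h B := [pick x in B :&: S].
have hBS B : B \in P -> exists2 x, x \in B :&: S & h B = Some x.
  move/PS; rewrite /h; case: pickP => [x xBS _ | noBS]; first by exists x.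
  by case/set0Pn=> x; rewrite noBS.
have h_inj : {in P &, injective h}.
  move=> B1 B2 B1P B2P eqh; have /trivIsetP triv : trivIset P by case/and3P: PD.
  have [[x xBS1 hB1] [y xBS2 hB2]] := (hBS _ B1P, hBS _ B2P).
  move: hB2; rewrite -eqh hB1 => -[eq_xy]; move: xBS2; rewrite -eq_xy.
  apply: contraTeq => neqB; have /disjoint_setI0/setP/(_ x) := triv _ _ B1P B2P neqB.
  by move: xBS1; rewrite !inE => /andP[-> _] /= ->.
rewrite -(card_imset S (@Some_inj _)) -(card_in_imset h_inj).
apply: subset_leq_card; apply/subsetP=> _ /imsetP[B /hBS[x + ->] ->].
by rewrite inE => /andP[_ xS]; apply: imset_f.
Qed.

(* Every block of the factor meets S, as otherwise it is a copy of F in E. *)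
Lemma F_factor_planted_card (VF T U : finType) (EF : {set {set VF}})
    (f : T -> U) (E : {set {set U}}) (S : {set T}) :
  injective f -> F_free EF E ->
  has_F_factor EF (planted_graph f E S) ->
  (#|T| <= #|S| * #|VF|)%N.
Proof.
move=> f_inj EFfree [P [PT PB]].
have blockP B : B \in P -> #|B| = #|VF| /\ B :&: S != set0.
  case/PB=> g [g_copy <-]; split; first by rewrite card_imset ?cardsT //; case: g_copy.
  apply/eqP=> gS; apply: EFfree; exists (f \o g).
  exact: is_copy_planted f_inj g_copy gS.
rewrite -cardsT (@card_uniform_partition _ #|VF| _ _ _ PT); last by move=> B /blockP[].
by rewrite leq_mul2r (card_partition_le_hitting PT) ?orbT // => B /blockP[].
Qed.

Lemma ntriples_preim_graph (m n : nat) (f : 'I_m -> 'I_n) (E : {set {set 'I_n}})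
    (X1 X2 X3 : {set 'I_m}) : injective f ->
  (ntriples E (f @: X1) (f @: X2) (f @: X3) <=
   ntriples (preim_graph f E) X1 X2 X3)%N.
Proof.
move=> f_inj; pose g (t : 'I_m * 'I_m * 'I_m) := (f t.1.1, f t.1.2, f t.2).
have g_inj : injective g by move=> [[? ?] ?] [[? ?] ?] [/f_inj-> /f_inj-> /f_inj->].
rewrite /ntriples -(card_imset _ g_inj); apply: subset_leq_card; apply/subsetP.
move=> [[x y] z] /[!inE] /= /and4P[/imsetP[a aX1 ->] /imsetP[b bX2 ->] /imsetP[c cX3 ->]].
move=> abcE; apply/imsetP; exists (a, b, c) => //.
by rewrite in_set /= aX1 bX2 cX3 in_set !imsetU !imset_set1.
Qed.

Lemma ntriples_subset (n : nat) (E E' : {set {set 'I_n}}) (X1 X2 X3 : {set 'I_n}) :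
  E \subset E' -> (ntriples E X1 X2 X3 <= ntriples E' X1 X2 X3)%N.
Proof.
move=> sEE'; apply: subset_leq_card; apply/subsetP=> t; rewrite !inE.
by case/and4P=> -> -> -> /(subsetP sEE') ->.
Qed.

Lemma exists_set_card (T : finType) (s : nat) : (s <= #|T|)%N ->
  exists S : {set T}, #|S| = s.
Proof.
move=> le_sT; exists [set x in take s (enum T)].
rewrite cardsE (card_uniqP _) ?size_take -?cardE ?take_uniq ?enum_uniq //.
by case: ltngtP le_sT => // ->.
Qed.

From mathcomp Require Import classical_sets reals.
Local Open Scope ring_scope.

Lemma min_codeg_ge_planted (R : realType) (T U : finType) (f : T -> U)
    (E : {set {set U}}) (S : {set T}) (a : R) :
  a + 2 <= #|S|%:R -> min_codeg_ge (planted_graph f E S) a.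
Proof.
move=> aS u v /(codeg_hitting_triples S); rewrite -(ler_nat R) natrD => Sle.
apply: le_trans (_ : #|[set e in hitting_triples S | (u \in e) && (v \in e)]|%:R <= _).
  lra.
rewrite ler_nat; apply: subset_leq_card; apply/fintype.subsetP=> e; rewrite !inE.
by case/andP=> -> ->; rewrite orbT.
Qed.

Lemma is_npmu_dot_preim (R : realType) (m n : nat) (f : 'I_m -> 'I_n)
    (p nu mu : R) (E : {set {set 'I_n}}) (E' : {set {set 'I_m}}) :
  injective f -> is_kgraph 3 E' -> preim_graph f E \subset E' ->
  nu * n%:R ^+ 3 <= mu * m%:R ^+ 3 -> is_npmu_dot p nu E -> is_npmu_dot p mu E'.
Proof.
move=> f_inj E'3 sEE' numu [_ Edense]; split=> // X1 X2 X3.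
have := Edense (f @: X1) (f @: X2) (f @: X3); rewrite !card_imset //.
have : (ntriples E (f @: X1) (f @: X2) (f @: X3) <= ntriples E' X1 X2 X3)%N.
  exact: leq_trans (ntriples_preim_graph _ _ _ _ f_inj) (ntriples_subset _ _ _ sEE').
rewrite -(ler_nat R); lra.
Qed.

Lemma is_npmu_dot_le (R : realType) (n : nat) (p q mu : R) (E : {set {set 'I_n}}) :
  0 <= q <= p -> is_npmu_dot p mu E -> is_npmu_dot q mu E.
Proof.
case/andP=> q0 qp [E3 Edense]; split=> // X1 X2 X3.
apply: le_trans (Edense X1 X2 X3); rewrite lerD2r -!mulrA ler_wpM2r //.
by rewrite !mulr_ge0.
Qed.

Definition dense_F_free_family (R : realType) (VF : finType) (EF : {set {set VF}})
    (p : R) : Prop :=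
  forall (mu : R) (n0 : nat), 0 < mu ->
    exists (n : nat) (E : {set {set 'I_n}}),
      (n0 <= n)%N /\ is_npmu_dot p mu E /\ F_free EF E.

Lemma not_dense_F_free_family (R : realType) (VF : finType) (EF : {set {set VF}})
    (p : R) :
  in_FACTOR R EF -> (0 < #|VF|)%N -> 0 < p <= 1 -> ~ dense_F_free_family EF p.
Proof.
move=> EFfactor k_gt0 /andP[p_gt0 p_le1] Efam; set k := #|VF| in k_gt0.
have p2_01 : 0 < p / 2 < 1 by apply/andP; split; lra.
have alpha_01 : 0 < ((8 * k)%:R^-1 : R) < 1.
  rewrite invr_gt0 invf_lt1 ltr0n ?ltr1n ?muln_gt0 ?k_gt0 //; lia.
have [n0 [mu [mu_gt0 factorize]]] := EFfactor _ _ p2_01 alpha_01.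
have [n [E [n_ge [Edense Efree]]]] := Efam (mu / 8) ((n0 + 7) * k)%N ltac:(lra).
pose t := (n %/ k)%N; pose m := (t * k)%N; pose s := (t %/ 2)%N.
have t_ge : (n0 + 7 <= t)%N by rewrite -(mulnK (n0 + 7) k_gt0) leq_div2r.
have le_mn : (m <= n)%N := leq_divM n k.
have le_n2m : (n <= 2 * m)%N by have := divn_eq n k; have := ltn_pmod n k_gt0; lia.
have [S cardS] : exists S : {set 'I_m}, #|S| = s.
  by apply: exists_set_card; rewrite card_ord (leq_trans (leq_div t 2)) ?leq_pmulr.
have widen_inj : injective (widen_ord le_mn) by move=> ? ? /(congr1 val) /= /val_inj.
have planted_dense : is_npmu_dot (p / 2) mu (planted_graph (widen_ord le_mn) E S).
  apply: (@is_npmu_dot_le _ _ p); first by apply/andP; split; lra.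
  apply: (is_npmu_dot_preim widen_inj _ _ _ Edense).
  - exact: is_kgraph_planted widen_inj (proj1 Edense).
  - exact: finset.subsetUl.
  have : (n ^ 3 <= (2 * m) ^ 3)%N by rewrite leq_exp2r.
  rewrite -(ler_nat R) !natrX natrM => n3_le; nra.
have planted_codeg : min_codeg_ge (planted_graph (widen_ord le_mn) E S)
                           ((8 * k)%:R^-1 * m%:R : R).
  apply: min_codeg_ge_planted; rewrite cardS.
  have -> : (8 * k)%:R^-1 * m%:R = t%:R / 8 :> R.
    by rewrite /m !natrM; field; rewrite pnatr_eq0 -lt0n.
  have : (t + 16 <= 8 * s)%N by rewrite /s; lia.
  rewrite -(ler_nat R) natrD natrM; lra.
have n0_le_m : (n0 <= m)%N by apply: leq_trans (leq_pmulr t k_gt0); lia.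
have := F_factor_planted_card widen_inj Efree
  (factorize m _ planted_dense planted_codeg n0_le_m (dvdn_mull _ (dvdnn _))).
rewrite card_ord cardS leq_mul2r eqn0Ngt k_gt0 /= leqNgt.
by rewrite ltn_Pdiv // (leq_trans _ t_ge) ?addn_gt0 ?orbT.
Qed.

(* With no vertices F has no edges, so the empty map is a copy in every graph. *)
Lemma not_F_free_card0 (VF V : finType) (EF : {set {set VF}}) (E : {set {set V}}) :
  is_kgraph 3 EF -> #|VF| = 0%N -> ~ F_free EF E.
Proof.
move=> EF3 VF0; have noVF (x : VF) : False by move: (card0_eq VF0 x); rewrite inE.
apply; exists (fun x => match noVF x with end); split=> [x | e /EF3]; first by case: noVF.
by have := max_card e; rewrite VF0 => /[swap] ->.
Qed.

Local Open Scope classical_set_scope.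

Theorem mainTheorem14 (R : realType) (VF : finType) (EF : {set {set VF}}) :
  is_kgraph 3 EF -> in_FACTOR R EF -> pi_dot R EF = 0.
Proof.
move=> EF3 EFfactor.
change (sup [set p : R | 0 <= p <= 1 /\ dense_F_free_family EF p] = 0).
suff /subset_set1[-> | ->] : [set p : R | 0 <= p <= 1 /\ dense_F_free_family EF p]
    `<=` [set 0] by [exact: sup0 | exact: sup1].
move=> p [/andP[p_ge0 p_le1] Efam]; apply/eqP; rewrite eq_le p_ge0 andbT leNgt.
apply/negP => p_gt0; case: (posnP #|VF|) => [VF0 | VF_gt0].
  by have [n [E [_ [_]]]] := Efam 1 0%N ltr01; exact: not_F_free_card0 EF3 VF0.
by apply: not_dense_F_free_family EFfactor VF_gt0 _ Efam; rewrite p_gt0.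
Qed.
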